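(* Let $\alpha,\beta\ge-\tfrac12$, let $w_{\alpha\beta}(x)=(1-x)^\alpha(1+x)^\beta$ on $[-1,1]$ and let $\{p_l\}_{l\ge0}$ be the orthonormal Jacobi polynomials for $\langle f,g\rangle=\int_{-1}^1 f\bar g\,w_{\alpha\beta}\,dx$ (positive leading coefficients). Let $0\le m\le n$ be integers and $\mathcal{R}(x)=p_m(x)+\sum_{l=0}^{m-1}e_lp_l(x)$, $e_l\in\mathbb{C}$. Let $\lambda_1=\frac{\beta-\alpha}{2+\alpha+\beta}$ and define $\mathcal{L}_n=\{P\in\mathbb{S}_n:\varepsilon(P)>\lambda_1\}$, $\mathcal{L}_n^m=\{P\in\mathbb{S}_n^m:\varepsilon(P)>\lambda_1\}$, $\mathcal{L}_n^{\mathcal{R}}=\{P\in\mathbb{S}_n^{\mathcal{R}}:\varepsilon(P)>\lambda_1\}$. If these sets are nonempty, then the set of minimizers of $\operatorname{var}_S$ over $\mathcal{L}_n$ equals the set of maximizers of $\varepsilon$ over $\mathcal{L}_n$, which is the set of maximizers $\mathcal{P}_n$ of $\varepsilon$ over $\mathbb{S}_n$; likewise the minimizers of $\operatorname{var}_S$ over $\mathcal{L}^m_n$ equal the maximizers of $\varepsilon$ over $\mathcal{L}^m_n$, namely $\mathcal{P}^m_n$, and the minimizers of $\operatorname{var}_S$ over $\mathcal{L}^{\mathcal{R}}_n$ equal the maximizers of $\varepsilon$ over $\mathcal{L}^{\mathcal{R}}_n$, namely $\mathcal{P}^{\mathcal{R}}_n$. In particular, among all polynomials in $\mathcal{L}_n$,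 $\mathcal{L}_n^m$, $\mathcal{L}_n^{\mathcal{R}}$, the polynomials $\mathcal{P}_n$, $\mathcal{P}_n^m$, $\mathcal{P}_n^{\mathcal{R}}$ respectively minimize the position variance.
   Context: $\varepsilon(f)=\int_{-1}^1x|f(x)|^2w_{\alpha\beta}(x)\,dx$ and $\|f\|^2=\int_{-1}^1|f|^2w_{\alpha\beta}dx$. Position variance: $\operatorname{var}_S(f)=\dfrac{1-\varepsilon(f)^2}{\big(\frac{\alpha-\beta}{\alpha+\beta+2}+\varepsilon(f)\big)^2}$ (defined when the denominator is nonzero). $\Pi_n=\operatorname{span}\{p_0,\dots,p_n\}$, $\Pi^m_n=\operatorname{span}\{p_m,\dots,p_n\}$, $\Pi^{\mathcal{R}}_n=\{c_m\mathcal{R}+\sum_{l=m+1}^nc_lp_l\}$ (complex coefficients), and $\mathbb{S}_n,\mathbb{S}^m_n,\mathbb{S}^{\mathcal{R}}_n$ are their subsets of norm-one elements. $\mathcal{P}_n$, $\mathcal{P}^m_n$, $\mathcal{P}^{\mathcal{R}}_n$ denote the maximizers of $\varepsilon$ over $\mathbb{S}_n$, $\mathbb{S}^m_n$, $\mathbb{S}^{\mathcal{R}}_n$ respectively (each unique up to multiplication by a complex scalar of modulus one). *)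

From HB Require Import structures.
From mathcomp Require Import all_boot all_order all_algebra.
From mathcomp Require Import all_classical all_reals all_analysis.
From mathcomp Require Import complex.
Set Implicit Arguments. Unset Strict Implicit. Unset Printing Implicit Defensive.
Import Order.TTheory GRing.Theory Num.Theory.
Local Open Scope classical_set_scope.
Local Open Scope ring_scope.
Local Open Scope complex_scope.

Section Jacobi.
Variable R : realType.

Definition jweight (a b : R) (x : R) : R := powR (1 - x) a * powR (1 + x) b.

Definition jint (F : R -> R) : R :=
  Rintegral lebesgue_measure `]-1%R, 1%R[ F.

Definition sqmod (z : R[i]) : R := (complex.Re z) ^+ 2 + (complex.Im z) ^+ 2.

Definition orthonormal_jacobi (a b : R) (p : nat -> {poly R}) : Prop :=
  (forall l, size (p l) = l.+1) /\
  (forall l, 0 < lead_coef (p l)) /\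
  (forall l k, jint (fun x => (p l).[x] * (p k).[x] * jweight a b x)
               = (l == k)%:R).

Definition cpoly (q : {poly R}) : {poly R[i]} := map_poly (fun r => r%:C) q.

Definition jnorm2 (a b : R) (f : {poly R[i]}) : R :=
  jint (fun x => sqmod f.[x%:C] * jweight a b x).
Definition jeps (a b : R) (f : {poly R[i]}) : R :=
  jint (fun x => x * sqmod f.[x%:C] * jweight a b x).

Definition varS (a b : R) (f : {poly R[i]}) : R :=
  (1 - jeps a b f ^+ 2) / ((a - b) / (a + b + 2) + jeps a b f) ^+ 2.

Definition Pi_n (p : nat -> {poly R}) (n : nat) : set {poly R[i]} :=
  [set f | exists c : nat -> R[i],
      f = \sum_(0 <= l < n.+1) c l *: cpoly (p l)].
Definition Pi_nm (p : nat -> {poly R}) (m n : nat) : set {poly R[i]} :=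
  [set f | exists c : nat -> R[i],
      f = \sum_(m <= l < n.+1) c l *: cpoly (p l)].
Definition Rpoly (p : nat -> {poly R}) (m : nat) (e : nat -> R[i]) : {poly R[i]} :=
  cpoly (p m) + \sum_(0 <= l < m) e l *: cpoly (p l).
Definition Pi_nR (p : nat -> {poly R}) (m n : nat) (e : nat -> R[i])
  : set {poly R[i]} :=
  [set f | exists c : nat -> R[i],
      f = c m *: Rpoly p m e + \sum_(m.+1 <= l < n.+1) c l *: cpoly (p l)].

Definition unit_sphere (a b : R) (A : set {poly R[i]}) : set {poly R[i]} :=
  [set f | A f /\ jnorm2 a b f = 1].

Definition lam1 (a b : R) : R := (b - a) / (2 + a + b).
Definition Lset (a b : R) (S : set {poly R[i]}) : set {poly R[i]} :=
  [set f | S f /\ lam1 a b < jeps a b f].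

Definition argmin_on (A : set {poly R[i]}) (F : {poly R[i]} -> R) :=
  [set f | A f /\ forall g, A g -> F f <= F g].
Definition argmax_on (A : set {poly R[i]}) (F : {poly R[i]} -> R) :=
  [set f | A f /\ forall g, A g -> F g <= F f].

End Jacobi.

From HB Require Import structures.
From mathcomp Require Import all_boot all_order all_algebra.
From mathcomp Require Import all_classical all_reals all_analysis.
From mathcomp Require Import complex.
From mathcomp Require Import ring lra.
Import Order.TTheory GRing.Theory Num.Theory.
Local Open Scope classical_set_scope.
Local Open Scope ring_scope.
Local Open Scope complex_scope.

(* Since lambda_1 = (b - a)/(2 + a + b) lies in (-1, 1), the position variance
   is (1 - e^2)/(e - lambda_1)^2 with e = eps(f), and this is strictly
   decreasing in e on (lambda_1, 1]; on a unit sphere eps <= 1 because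
   |x| <= 1 on the interval.  So minimizing the variance over L is maximizing
   eps over L, and as L is a nonempty superlevel set of eps, its maximizers
   are those of eps over the whole sphere.  Nothing about the spans of the
   Jacobi polynomials is used. *)

Lemma sqmod_ge0 {R : realType} (z : R[i]) : 0 <= sqmod z.
Proof. by rewrite /sqmod addr_ge0 // sqr_ge0. Qed.

Lemma jweight_ge0 {R : realType} (a b x : R) : 0 <= jweight a b x.
Proof. by rewrite /jweight mulr_ge0 // powR_ge0. Qed.

(* No measurability is needed: the integral is monotone on nonnegative
   functions through the suprema of simple functions defining it. *)
Lemma le_integral_ge0 (R : realType) (D : set R) (f g : R -> \bar R) :
  (forall x, D x -> (0 <= f x)%E) -> (forall x, D x -> (f x <= g x)%E) ->
  (\int[lebesgue_measure]_(x in D) f x <= \int[lebesgue_measure]_(x in D) g x)%E.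
Proof.
move=> f0 fg.
have g0 x : D x -> (0 <= g x)%E by move=> Dx; exact: le_trans (f0 _ Dx) (fg _ Dx).
rewrite /integral; apply: leeB; apply: ereal_sup_le => _ [h /= hf <-];
  exists h => // x; apply: le_trans (hf x) _.
- rewrite !funeposE /patch; case: ifP => [/[1!inE] Dx|//].
  by rewrite (max_idPl (f0 _ Dx)) (max_idPl (g0 _ Dx)) fg.
- rewrite !funenegE /patch; case: ifP => [/[1!inE] Dx|//].
  have gN : (- g x <= 0)%E by rewrite leeNl oppe0 g0.
  have fN : (- f x <= 0)%E by rewrite leeNl oppe0 f0.
  by rewrite (max_idPr gN) (max_idPr fN).
Qed.

(* [Rintegral] returns 0 on infinite integrals, so the normalization is first
   turned into the extended-real equality [I = 1]; the positive part of the
   integrand of [jeps] is then dominated by that of [jnorm2], which avoids any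
   integrability question for [jeps]. *)
Lemma jeps_le1 (R : realType) (a b : R) (f : {poly R[i]}) :
  jnorm2 a b f = 1 -> jeps a b f <= 1.
Proof.
rewrite /jnorm2 /jeps /jint /Rintegral.
set I := integral _ _ _; set J := integral _ _ _ => normI.
have I_ge0 : (0 <= I)%E.
  by apply: integral_ge0 => x _; rewrite lee_fin mulr_ge0 ?sqmod_ge0 ?jweight_ge0.
have I1 : I = 1%E.
  by move: normI I_ge0; case: I => [r /= ->| |] //= /eqP; rewrite eq_sym oner_eq0.
suff : (J <= 1)%E by case: J => [r| |] //=; rewrite lee_fin.
rewrite /J integralE -I1 -[X in (_ <= X)%E]sube0.
apply: leeB; last by apply: integral_ge0 => x _; exact: funeneg_ge0.
apply: le_integral_ge0 => [x _|x]; first exact: funepos_ge0.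
rewrite /= in_itv /= => /andP[x_gtN1 x_lt1].
have t_ge0 := mulr_ge0 (sqmod_ge0 f.[x%:C]) (jweight_ge0 a b x).
rewrite funeposE ge_max !lee_fin t_ge0 andbT -mulrA.
by move: t_ge0; set t := (_ * _); nra.
Qed.

Lemma lam1_gtN1 (R : realType) (a b : R) :
  -(1/2) <= a -> -(1/2) <= b -> -1 < lam1 a b.
Proof. by move=> ha hb; rewrite /lam1 ltr_pdivlMr; lra. Qed.

Lemma lam1_lt1 (R : realType) (a b : R) :
  -(1/2) <= a -> -(1/2) <= b -> lam1 a b < 1.
Proof. by move=> ha hb; rewrite /lam1 ltr_pdivrMr; lra. Qed.

Lemma varSE (R : realType) (a b : R) (f : {poly R[i]}) :
  varS a b f = (1 - jeps a b f ^+ 2) / (jeps a b f - lam1 a b) ^+ 2.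
Proof.
rewrite /varS; have -> : (a - b) / (a + b + 2) = - lam1 a b.
  by rewrite /lam1 -mulNr opprB [a + b + 2]addrC addrA.
by rewrite (addrC (- lam1 a b)).
Qed.

Lemma ler_var_ratio (R : realFieldType) (l e1 e2 : R) :
  -1 < l -> l < 1 -> l < e1 -> e1 <= 1 -> l < e2 -> e2 <= 1 ->
  ((1 - e1 ^+ 2) / (e1 - l) ^+ 2 <= (1 - e2 ^+ 2) / (e2 - l) ^+ 2) = (e2 <= e1).
Proof.
move=> l_gtN1 l_lt1 e1_gt e1_le1 e2_gt e2_le1.
have d1 : 0 < (e1 - l) ^+ 2 by rewrite exprn_gt0 // subr_gt0.
have d2 : 0 < (e2 - l) ^+ 2 by rewrite exprn_gt0 // subr_gt0.
rewrite ler_pdivrMr // mulrAC ler_pdivlMr //.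
have q1 : 0 < 1 - l * e1 by nra.
have q2 : 0 < 1 - l * e2 by nra.
have Q : 0 < (1 - l * e1) * (e2 - l) + (1 - l * e2) * (e1 - l).
  by rewrite addr_gt0 // mulr_gt0 // subr_gt0.
have -> : (1 - e1 ^+ 2) * (e2 - l) ^+ 2 <= (1 - e2 ^+ 2) * (e1 - l) ^+ 2
  = (0 <= (e1 - e2) * ((1 - l * e1) * (e2 - l) + (1 - l * e2) * (e1 - l))).
  by rewrite -subr_ge0; congr (0 <= _); ring.
by rewrite pmulr_lge0 // subr_ge0.
Qed.

Lemma argmin_varS_Lset (R : realType) (a b : R) (A : set {poly R[i]}) :
  -(1/2) <= a -> -(1/2) <= b ->
  let L := Lset a b (unit_sphere a b A) in
  argmin_on L (varS a b) = argmax_on L (jeps a b).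
Proof.
move=> ha hb L.
have varS_le f g : L f -> L g -> (varS a b f <= varS a b g) = (jeps a b g <= jeps a b f).
  move=> [[_ /jeps_le1 f_le1] f_gt] [[_ /jeps_le1 g_le1] g_gt].
  by rewrite !varSE ler_var_ratio // ?lam1_gtN1 ?lam1_lt1.
apply/seteqP; split=> f [Lf f_opt]; split=> // g Lg.
- by rewrite -varS_le //; exact: f_opt.
- by rewrite varS_le //; exact: f_opt.
Qed.

Lemma argmax_on_superlevel (R : realType) (A : set {poly R[i]})
    (F : {poly R[i]} -> R) (l : R) :
  [set f | A f /\ l < F f] !=set0 ->
  argmax_on [set f | A f /\ l < F f] F = argmax_on A F.
Proof.
move=> [g0 [Ag0 g0_gt]]; apply/seteqP; split=> f.
- move=> [[Af f_gt] f_opt]; split=> // g Ag; have [g_gt | g_le] := ltP l (F g); first exact: f_opt.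
  exact: le_trans g_le (ltW f_gt).
- move=> [Af f_opt]; have f_gt : l < F f by apply: lt_le_trans g0_gt (f_opt g0 Ag0).
  by split=> // g [Ag _]; exact: f_opt.
Qed.

Lemma argmin_varS_sphere (R : realType) (a b : R) (A : set {poly R[i]}) :
  -(1/2) <= a -> -(1/2) <= b ->
  let S := unit_sphere a b A in
  Lset a b S !=set0 ->
  argmin_on (Lset a b S) (varS a b) = argmax_on (Lset a b S) (jeps a b) /\
  argmax_on (Lset a b S) (jeps a b) = argmax_on S (jeps a b).
Proof.
move=> ha hb S L_neq0; split; first exact: argmin_varS_Lset.
exact: argmax_on_superlevel.
Qed.

Theorem theorem4p3 (R : realType) (a b : R) (p : nat -> {poly R})
  (m n : nat) (e : nat -> R[i]) :
  -(1/2) <= a -> -(1/2) <= b ->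
  orthonormal_jacobi a b p ->
  (m <= n)%N ->
  let S := unit_sphere a b (Pi_n p n) in
  let Sm := unit_sphere a b (Pi_nm p m n) in
  let SR := unit_sphere a b (Pi_nR p m n e) in
  (Lset a b S !=set0 ->
     argmin_on (Lset a b S) (varS a b) = argmax_on (Lset a b S) (jeps a b) /\
     argmax_on (Lset a b S) (jeps a b) = argmax_on S (jeps a b)) /\
  (Lset a b Sm !=set0 ->
     argmin_on (Lset a b Sm) (varS a b) = argmax_on (Lset a b Sm) (jeps a b) /\
     argmax_on (Lset a b Sm) (jeps a b) = argmax_on Sm (jeps a b)) /\
  (Lset a b SR !=set0 ->
     argmin_on (Lset a b SR) (varS a b) = argmax_on (Lset a b SR) (jeps a b) /\
     argmax_on (Lset a b SR) (jeps a b) = argmax_on SR (jeps a b)).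
Proof.
move=> ha hb _ _ S Sm SR.
by split; [|split]; exact: argmin_varS_sphere.
Qed.
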